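(* Let $\kappa$ be an uncountable regular cardinal, let $\mathcal{I}$ be a $\kappa$-complete proper ideal on $\kappa$ containing every bounded subset of $\kappa$, and let $\nu\in\{2,\kappa\}$. Then the class of basic $\mathcal{I}$-Borel subsets of ${}^{\kappa}\nu$ coincides with the class of $\kappa$-Borel subsets of ${}^{\kappa}\nu$. In particular, the class of basic $\mathcal{I}$-Borel sets does not depend on $\mathcal{I}$.
   Context: ${}^{\kappa}\nu$ is the set of functions $\kappa\to\nu$. For a function $f$ with domain contained in $\kappa$ and values in $\nu$, $\mathbf{N}_f=\{x\in{}^{\kappa}\nu: f\subseteq x\}$. A basic $\kappa$-open set is a set $\mathbf{N}_f$ with $f\colon X\to\nu$, $X\subseteq\kappa$, $|X|<\kappa$; the $\kappa$-Borel sets form the smallest class containing the basic $\kappa$-open sets and closed under complements and unions of at most $\kappa$ sets. A basic $\mathcal{I}$-open set is $\mathbf{N}_f$ with $f\colon D\to\nu$, $D\in\mathcal{I}$; the basic $\mathcal{I}$-Borel sets form the smallest class containing the basic $\mathcal{I}$-open sets and closed under complements and unions of at most $\kappa$ sets. *)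

From mathcomp Require Import all_boot.
From mathcomp Require Import boolp classical_sets.
Set Implicit Arguments. Unset Strict Implicit. Unset Printing Implicit Defensive.
Local Open Scope classical_set_scope.

(* The cardinal kappa is represented by a type K well-ordered by lt
   (so K is the set of ordinals below kappa, up to isomorphism). *)

(* |A| < |K| for A a subset of K: there is no injection of K into A. *)
Definition small (K : Type) (A : set K) : Prop :=
  ~ exists f : K -> K, injective f /\ forall x, A (f x).

Definition bounded (K : Type) (lt : K -> K -> Prop) (A : set K) : Prop :=
  exists a, forall x, A x -> lt x a.

Record uncountable_regular_cardinal (K : Type) (lt : K -> K -> Prop) : Prop := {
  urc_irrefl : forall x, ~ lt x x;
  urc_trans : forall x y z, lt x y -> lt y z -> lt x z;
  urc_total : forall x y, lt x y \/ x = y \/ lt y x;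
  urc_wf : well_founded lt;
  (* initial ordinal: every proper initial segment has size < kappa *)
  urc_initial : forall a, small [set x | lt x a];
  urc_uncountable : ~ exists f : K -> nat, injective f;
  urc_regular : forall A : set K, small A -> bounded lt A
}.

Record good_ideal (K : Type) (lt : K -> K -> Prop) (I : set (set K)) : Prop := {
  gi_down : forall A B : set K, A `<=` B -> I B -> I A;
  gi_complete : forall (D : set K) (F : K -> set K),
      small D -> (forall j, D j -> I (F j)) -> I (\bigcup_(j in D) F j);
  gi_proper : ~ I setT;
  gi_bounded : forall A : set K, bounded lt A -> I A
}.

(* N_f for the partial function f = g restricted to D *)
Definition Nbasic (K V : Type) (D : set K) (g : K -> V) : set (K -> V) :=
  [set x | forall i, D i -> x i = g i].

Definition kappa_open_basic (K V : Type) (A : set (K -> V)) : Prop :=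
  exists (D : set K) (g : K -> V), small D /\ A = Nbasic D g.

Definition I_open_basic (K V : Type) (I : set (set K)) (A : set (K -> V)) : Prop :=
  exists (D : set K) (g : K -> V), I D /\ A = Nbasic D g.

(* smallest class containing `basic`, closed under complements and unions
   of at most kappa sets (families indexed by subsets of K) *)
Inductive borel_gen (K V : Type) (basic : set (K -> V) -> Prop) : set (K -> V) -> Prop :=
| bg_basic A : basic A -> borel_gen basic A
| bg_compl A : borel_gen basic A -> borel_gen basic (~` A)
| bg_union (D : set K) (F : K -> set (K -> V)) :
    (forall j, D j -> borel_gen basic (F j)) -> borel_gen basic (\bigcup_(j in D) F j).

Definition kappa_Borel (K V : Type) (A : set (K -> V)) : Prop :=
  borel_gen (@kappa_open_basic K V) A.

Definition basic_I_Borel (K V : Type) (I : set (set K)) (A : set (K -> V)) : Prop :=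
  borel_gen (@I_open_basic K V I) A.

From mathcomp Require Import all_boot.
From mathcomp Require Import boolp classical_sets.
Local Open Scope classical_set_scope.

(* Every basic I-open set N_f is the intersection of the at most kappa
   one-point cylinders N_{f|{j}}, j in dom f, and these are kappa-open; hence
   basic I-Borel sets are kappa-Borel.  Conversely, by regularity a domain of
   size < kappa is bounded, hence in I, so basic kappa-open sets are basic
   I-open. *)

Lemma borel_gen_sub (K V : Type) (b1 b2 : set (K -> V) -> Prop) :
  (forall A, b1 A -> borel_gen b2 A) ->
  forall A, borel_gen b1 A -> borel_gen b2 A.
Proof.
move=> b12 A; elim=> [B /b12 //|B _ IH|D F _ IH].
- exact: bg_compl.
- exact: bg_union.
Qed.

Lemma Nbasic_bigcap (K V : Type) (D : set K) (g : K -> V) :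
  Nbasic D g = ~` \bigcup_(j in D) ~` Nbasic [set j] g.
Proof.
apply/seteqP; split=> x /=.
- by move=> xg [j Dj]; apply=> i ->; apply: xg.
- move=> xg i Di; apply: contrapT => xgi; apply: xg; exists i => //.
  by move=> /(_ i erefl).
Qed.

Lemma borel_gen_Nbasic (K V : Type) (basic : set (K -> V) -> Prop)
    (D : set K) (g : K -> V) :
  (forall j, basic (Nbasic [set j] g)) -> borel_gen basic (Nbasic D g).
Proof.
move=> basic1; rewrite Nbasic_bigcap.
by apply/bg_compl/bg_union => j _; apply/bg_compl/bg_basic.
Qed.

Lemma small_set1 (K : Type) (j : K) : ~ (forall x y : K, x = y) -> small [set j].
Proof.
move=> nontriv [f [f_inj f_j]]; apply: nontriv => x y.
by apply: f_inj; rewrite (f_j x) (f_j y).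
Qed.

Section RegularCardinal.
Context {K : Type} {lt : K -> K -> Prop} {I : set (set K)}.
Hypotheses (hK : uncountable_regular_cardinal lt) (hI : good_ideal lt I).

Lemma urc_nontrivial : ~ (forall x y : K, x = y).
Proof.
by move=> triv; apply: (urc_uncountable hK); exists (fun=> 0%N) => x y _.
Qed.

Lemma small_ideal (D : set K) : small D -> I D.
Proof. by move=> /(urc_regular hK); apply: gi_bounded. Qed.

Lemma basic_I_Borel_kappa_Borel (V : Type) (A : set (K -> V)) :
  basic_I_Borel I A <-> kappa_Borel A.
Proof.
split; apply: borel_gen_sub => _ [D [g [domD ->]]].
- apply: borel_gen_Nbasic => j; exists [set j], g; split=> //.
  exact/small_set1/urc_nontrivial.
- by apply: bg_basic; exists D, g; split=> //; apply: small_ideal.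
Qed.

End RegularCardinal.

Theorem fact4p14 (K : Type) (lt : K -> K -> Prop) (I : set (set K)) :
  uncountable_regular_cardinal lt ->
  good_ideal lt I ->
  (forall A : set (K -> bool), basic_I_Borel I A <-> kappa_Borel A) /\
  (forall A : set (K -> K), basic_I_Borel I A <-> kappa_Borel A).
Proof.
move=> hK hI; split=> A; exact: (basic_I_Borel_kappa_Borel hK hI).
Qed.
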